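(* Let $n,k,r$ be integers with $k,r\geq 2$ and $n\geq k+1$. If $H$ is a vertex-$k$-maximal $r$-uniform hypergraph on $n$ vertices, then $|E(H)|\geq \binom{n}{r}-\binom{n-k}{r}$.
   Context: Binomial coefficients satisfy $\binom{a}{b}=0$ when $b>a$. A hypergraph $H=(V,E)$ consists of a finite vertex set $V$ and a set $E$ of non-empty subsets of $V$ (edges); it is $r$-uniform if all edges have exactly $r$ elements. The complement $H^c$ has as edges the $r$-subsets of $V$ not in $E$. A subhypergraph is $H'=(V',E')$ with $V'\subseteq V$, $E'\subseteq E$. $H+e=(V,E\cup\{e\})$ for $e\in E(H^c)$. $H-Y$ is the hypergraph induced on $V\setminus Y$ (keeping edges contained in $V\setminus Y$). Connectedness is defined via paths (alternating sequences of distinct vertices and distinct edges with consecutive vertices in the intermediate edge). A vertex-cut is a set $X$ with $H-X$ disconnected. $\kappa(H)$ is the minimum size of a vertex-cut if one exists, and $|V(H)|-1$ otherwise. $\overline{\kappa}(H)=\max\{\kappa(H'): H'\subseteq H\}$. An $r$-uniform hypergraph $H$ is vertex-$k$-maximal if $\overline{\kappa}(H)\leq k$ but $\overline{\kappa}(H+e)\geq k+1$ for every $e\in E(H^c)$. *)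

From mathcomp Require Import all_boot.
From Stdlib Require Import ClassicalEpsilon.
Set Implicit Arguments. Unset Strict Implicit. Unset Printing Implicit Defensive.

Section Hyper.
Variable T : finType.

(* A hypergraph is a pair (V, E) with V : {set T}, E : {set {set T}}. *)

Definition is_path (E : {set {set T}}) (u v : T) : Prop :=
  exists (vs : seq T) (es : seq {set T}),
    [/\ size vs = (size es).+1, uniq vs, uniq es,
        all (fun e => e \in E) es &
        [/\ nth u vs 0 = u, last u vs = v &
        forall i, i < size es ->
          (nth u vs i \in nth set0 es i) && (nth u vs i.+1 \in nth set0 es i)]].

Definition connected (V : {set T}) (E : {set {set T}}) : Prop :=
  forall u v, u \in V -> v \in V -> is_path E u v.

Definition connectedb (V : {set T}) (E : {set {set T}}) : bool :=
  if excluded_middle_informative (connected V E) then true else false.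

Definition hdel_V (V : {set T}) (Y : {set T}) : {set T} := V :\: Y.
Definition hdel_E (V : {set T}) (E : {set {set T}}) (Y : {set T}) : {set {set T}} :=
  [set e in E | e \subset V :\: Y].

Definition vcut (V : {set T}) (E : {set {set T}}) (X : {set T}) : bool :=
  (X \subset V) && ~~ connectedb (hdel_V V X) (hdel_E V E X).

Definition kappa (V : {set T}) (E : {set {set T}}) : nat :=
  if [exists X, vcut V E X]
  then \big[minn/#|V|]_(X : {set T} | vcut V E X) #|X|
  else #|V|.-1.

Definition subhyp (V' : {set T}) (E' : {set {set T}}) (V : {set T}) (E : {set {set T}}) : bool :=
  [&& V' \subset V, E' \subset E & [forall e in E', e \subset V']].

Definition kappabar (V : {set T}) (E : {set {set T}}) : nat :=
  \max_(p : {set T} * {set {set T}} | subhyp p.1 p.2 V E) kappa p.1 p.2.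

Definition uniform (r : nat) (E : {set {set T}}) : Prop :=
  forall e, e \in E -> #|e| = r.

Definition vertex_k_maximal (r k : nat) (V : {set T}) (E : {set {set T}}) : Prop :=
  kappabar V E <= k /\
  forall e : {set T}, e \subset V -> #|e| = r -> e \notin E ->
    k.+1 <= kappabar V (e |: E).

End Hyper.

From mathcomp Require Import all_boot zify.
From Stdlib Require Import Classical ClassicalEpsilon.
Set Implicit Arguments. Unset Strict Implicit. Unset Printing Implicit Defensive.

(* Call an r-set e outside E saturating for (V, E) if adding it pushes the
   maximal local connectivity kappabar above k; in a vertex-k-maximal
   hypergraph every r-set outside E is saturating.  We show by induction on
   |V| that a hypergraph with kappabar <= k has at most C(|V| - k, r)
   saturating sets.  If |V| >= k + 2 then kappa <= k gives a vertex cut, which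
   can be resized to a separation (X, A, B) with |X| = k.  A subhypergraph of
   H + e with connectivity > k cannot be separated by X, so it lies inside
   A ∪ X or B ∪ X, where e is saturating for the induced hypergraph, unless e
   is an r-subset of A ∪ B meeting both sides.  Hence there are at most
   C(|A|, r) + C(|B|, r) + #(crossing r-sets) = C(|A| + |B|, r) = C(|V| - k, r)
   saturating sets. *)

Definition decide (P : Prop) : bool :=
  if excluded_middle_informative P then true else false.

Lemma decideP (P : Prop) : reflect P (decide P).
Proof. by rewrite /decide; case: excluded_middle_informative => h; constructor. Qed.

Lemma bigmin_le (I : finType) (P : pred I) (F : I -> nat) m i :
  P i -> \big[minn/m]_(j | P j) F j <= F i.
Proof.
move=> Pi; have : i \in [seq j <- index_enum I | P j] by rewrite mem_filter Pi mem_index_enum.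
rewrite -big_filter; elim: (filter _ _) => //= j s IH.
rewrite inE big_cons => /orP[/eqP <- | /IH]; first exact: geq_minl.
by rewrite geq_min => ->; rewrite orbT.
Qed.

Section Hypergraphs.
Variable T : finType.
Implicit Types (u v w x y z : T) (e f V X A B C D S : {set T}) (E F : {set {set T}}).

Definition draws S (r : nat) := [set e : {set T} | e \subset S & #|e| == r].

Section Paths.
Variable F : {set {set T}}.

(* [is_path F u v] unfolds to [exists vs es, hpath u v vs es]. *)
Definition hpath u v (vs : seq T) (es : seq {set T}) :=
  [/\ size vs = (size es).+1, uniq vs, uniq es, all (fun e => e \in F) es &
      [/\ nth u vs 0 = u, last u vs = v &
          forall i, i < size es ->
            (nth u vs i \in nth set0 es i) && (nth u vs i.+1 \in nth set0 es i)]].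

Lemma is_path_refl u : is_path F u u.
Proof. by exists [:: u], [::]. Qed.

Lemma hpath_take u v vs es j : hpath u v vs es -> j < size vs ->
  hpath u (nth u vs j) (take j.+1 vs) (take j es).
Proof.
move=> [svs uvs ues allF [vs0 _ adj]] ltj.
have lej : j <= size es by rewrite -ltnS -svs.
split; rewrite ?size_takel ?take_uniq //.
  by apply/allP => e /mem_take; apply: (allP allF).
split; first by rewrite nth_take.
  by rewrite -nth_last size_takel // nth_take.
move=> i ltij.
by rewrite !nth_take ?ltnS ?adj ?(leq_trans ltij lej) ?(ltnW ltij).
Qed.

Lemma hpath_rcons u w vs es f z : hpath u w vs es -> f \in F -> w \in f -> z \in f ->
  z \notin vs -> f \notin es -> hpath u z (rcons vs z) (rcons es f).
Proof.
move=> [svs uvs ues allF [vs0 vsw adj]] Ff wf zf zvs fes.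
split; rewrite ?size_rcons ?rcons_uniq ?all_rcons ?svs ?zvs ?fes ?Ff //.
split; rewrite ?last_rcons ?nth_rcons ?svs //.
move=> i; rewrite ltnS leq_eqVlt => /orP[/eqP->|ltie].
  have lastw : nth u vs (size es) = w by rewrite -vsw -nth_last svs.
  by rewrite !nth_rcons svs ltnSn !ltnn !eqxx lastw wf zf.
by rewrite !nth_rcons svs ltnS (ltnW ltie) ltie ltnS ltie adj.
Qed.

(* Cut the path at its first vertex in f: then f is still unused, and z can be
   appended unless it is that vertex. *)
Lemma is_path_extend u w f z :
  is_path F u w -> f \in F -> w \in f -> z \in f -> is_path F u z.
Proof.
move=> [vs [es pw]] Ff wf zf.
have wvs : w \in vs.
  case: pw => svs _ _ _ [_ <- _]; case: vs svs => // x s _; exact: (mem_last x s).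
pose j := find (mem f) vs.
have hasf : has (mem f) vs by apply/hasP; exists w.
have ltj : j < size vs by rewrite -has_find.
have before_f i : i < j -> nth u vs i \notin f by move/(before_find u) => /= ->.
have pj := hpath_take pw ltj.
have [->|zj] := eqVneq z (nth u vs j); first by exists (take j.+1 vs), (take j es).
have fj : nth u vs j \in f := nth_find u hasf.
have zvs : z \notin take j.+1 vs.
  apply/negP => /(nthP u) [i]; rewrite size_takel // ltnS leq_eqVlt.
  case/orP=> [/eqP->|ltij]; rewrite nth_take ?ltnS ?(ltnW ltij) // => ez.
    by rewrite ez eqxx in zj.
  by move: (before_f i ltij); rewrite ez zf.
have fes : f \notin take j es.
  case: pw => svs _ _ _ [_ _ adj].
  have lej : j <= size es by rewrite -ltnS -svs.
  apply/negP => /(nthP set0) [i]; rewrite size_takel // => ltij.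
  rewrite nth_take // => ef.
  have /andP[+ _] := adj i (leq_trans ltij lej).
  by rewrite ef; apply/negP/before_f.
exists (rcons (take j.+1 vs) z), (rcons (take j es) f).
exact: hpath_rcons pj Ff fj zf zvs fes.
Qed.

Lemma is_path_closed A u v :
  (forall f x y, f \in F -> x \in f -> y \in f -> x \in A -> y \in A) ->
  u \in A -> is_path F u v -> v \in A.
Proof.
move=> closedA uA [vs [es [svs _ _ allF [vs0 <- adj]]]].
suff inA i : i < size vs -> nth u vs i \in A by rewrite -nth_last inA // svs.
elim: i => [|i IH] lti; first by rewrite vs0.
have ltie : i < size es by rewrite -ltnS -svs.
have /andP[xi xi1] := adj i ltie.
apply: closedA xi xi1 (IH (ltnW lti)).
by apply: (allP allF); rewrite mem_nth.
Qed.

End Paths.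

Lemma connectedbP V E : reflect (connected V E) (connectedb V E).
Proof. exact: decideP. Qed.

Lemma connected_card_le1 S F : #|S| <= 1 -> connected S F.
Proof.
move=> /card_le1_eqP S1 u v uS vS.
by rewrite (S1 _ _ vS uS); apply: is_path_refl.
Qed.

Definition separation V E X A B :=
  [/\ [disjoint A & B], A :|: B = V :\: X, A != set0, B != set0 &
      forall f, f \in E -> f \subset A :|: B -> f \subset A \/ f \subset B].

Lemma separation_sym V E X A B : separation V E X A B -> separation V E X B A.
Proof.
case=> dAB UAB A0 B0 sepE; split=> //; first by rewrite disjoint_sym.
  by rewrite setUC.
by move=> f Ef; rewrite setUC => /(sepE _ Ef) []; auto.
Qed.

Lemma card_separation V E X A B : separation V E X A B -> #|A| + #|B| = #|V :\: X|.
Proof. by case=> dAB <- _ _ _; rewrite cardsU (disjoint_setI0 dAB) cards0 subn0. Qed.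

Lemma separation_vcut V E X A B : X \subset V -> separation V E X A B -> vcut V E X.
Proof.
move=> XV [dAB UAB /set0Pn[a aA] /set0Pn[b bB] sepE].
rewrite /vcut XV; apply/connectedbP => conn.
have inV x : x \in A :|: B -> x \in hdel_V V X by rewrite /hdel_V UAB.
have closedA f x y : f \in hdel_E V E X -> x \in f -> y \in f -> x \in A -> y \in A.
  rewrite inE -UAB => /andP[/sepE sepf /sepf [] /subsetP fsub] xf yf xA; first exact: fsub.
  by move: (fsub x xf); rewrite (disjointFr dAB xA).
have := is_path_closed closedA aA (conn a b (inV a _) (inV b _)).
by rewrite !inE aA bB (disjointFl dAB bB) orbT => /(_ isT isT).
Qed.

Lemma vcut_separation V E X : vcut V E X -> exists A B, separation V E X A B.
Proof.
case/andP=> _ /connectedbP disconn.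
set F := hdel_E V E X; set S := V :\: X.
have [u [v [uS vS nopath]]] : exists u v, [/\ u \in S, v \in S & ~ is_path F u v].
  apply: NNPP => none; apply: disconn => u v uS vS.
  by apply: NNPP => nopath; apply: none; exists u, v.
pose A := [set w in S | decide (is_path F u w)].
have AS : A \subset S by apply/subsetP => w; rewrite inE => /andP[].
exists A, (S :\: A); split.
- by rewrite -setI_eq0 setDE setICA setICr setI0.
- apply/setP => w; rewrite in_setU in_setD.
  by case: (boolP (w \in A)) => [/(subsetP AS) -> | ].
- by apply/set0Pn; exists u; rewrite inE uS; apply/decideP/is_path_refl.
- by apply/set0Pn; exists v; rewrite in_setD vS andbT inE vS; apply/decideP.
move=> f Ef fS.
have {}fS : f \subset S by apply: subset_trans fS _; rewrite subUset AS subsetDl.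
have Ff : f \in F by rewrite inE Ef.
have [fA0 | [w /setIP[wf wA]]] := set_0Vmem (f :&: A).
  right; apply/subsetP => z zf; rewrite in_setD (subsetP fS z zf) andbT.
  apply: contraT; rewrite negbK => zA.
  by rewrite -(in_set0 z) -fA0 inE zf zA.
left; apply/subsetP => z zf; rewrite inE (subsetP fS z zf).
move: wA; rewrite inE => /andP[_ /decideP pw].
exact/decideP/(is_path_extend pw Ff wf zf).
Qed.

Lemma separation_shrink V E X A B A' B' :
  separation V E X A B -> A' \subset A -> B' \subset B -> A' != set0 -> B' != set0 ->
  separation V E (V :\: (A' :|: B')) A' B'.
Proof.
move=> [dAB UAB _ _ sepE] sA sB A'0 B'0.
have sV : A' :|: B' \subset V.
  by apply: subset_trans (setUSS sA sB) _; rewrite UAB subsetDl.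
split=> //; first exact: disjointW sA sB dAB.
  by rewrite setDDr setDv set0U (setIidPr sV).
move=> f Ef fAB'.
have fAB : f \subset A :|: B := subset_trans fAB' (setUSS sA sB).
have inside C D C' : [disjoint C & D] -> C' \subset C ->
    f \subset C -> f \subset C' :|: D -> f \subset C'.
  move=> dCD sC' fC /subsetP fCD; apply/subsetP => z zf.
  by move: (fCD z zf); rewrite inE (disjointFr dCD (subsetP fC z zf)) orbF.
case: (sepE f Ef fAB) => [fA | fB]; [left | right].
  exact: inside (disjointWr sB dAB) sA fA fAB'.
by apply: inside (disjointWr sA _) sB fB _; rewrite 1?disjoint_sym // setUC.
Qed.

Lemma separation_restrict V E X A B V' E' :
  separation V E X A B -> V' \subset V ->
  {in E', forall f, f \subset V'} ->
  {in E', forall f, f \subset A :|: B -> f \subset A \/ f \subset B} ->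
  V' :&: A != set0 -> V' :&: B != set0 ->
  separation V' E' (V' :&: X) (V' :&: A) (V' :&: B).
Proof.
move=> [dAB UAB _ _ _] sV' E'V' sepE' A'0 B'0; split=> //.
- exact: disjointW (subsetIr _ _) (subsetIr _ _) dAB.
- by rewrite -setIUr UAB setIDA (setIidPl sV') setDIr setDv set0U.
move=> f E'f; rewrite -setIUr subsetI => /andP[_ fAB].
by case: (sepE' f E'f fAB) => fC; [left | right]; rewrite subsetI E'V'.
Qed.

Lemma exists_subset_card S m : m <= #|S| -> exists2 C : {set T}, C \subset S & #|C| = m.
Proof.
move=> leS.
have : 0 < #|draws S m| by rewrite cards_draws bin_gt0.
by case/card_gt0P => C; rewrite inE => /andP[CS /eqP CM]; exists C.
Qed.

Lemma separation_resize V E X A B k :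
  separation V E X A B -> X \subset V -> #|X| <= k -> k.+2 <= #|V| ->
  exists X' A' B', [/\ separation V E X' A' B', X' \subset V & #|X'| = k].
Proof.
move=> sep XV Xk kV; have cardAB := card_separation sep.
rewrite cardsD (setIidPr XV) in cardAB.
case: (sep) => _ _ A0 B0 _; rewrite -!card_gt0 in A0 B0.
set s := #|V| - k; set a := minn #|A| s.-1.
have [A' sA cardA'] := exists_subset_card (geq_minl #|A| s.-1).
have [B' sB cardB'] : exists2 B' : {set T}, B' \subset B & #|B'| = s - a.
  by apply: exists_subset_card; rewrite /a /s; lia.
have A'0 : A' != set0 by rewrite -card_gt0 cardA' /a /s; lia.
have B'0 : B' != set0 by rewrite -card_gt0 cardB' /a /s; lia.
have sep' := separation_shrink sep sA sB A'0 B'0.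
exists (V :\: (A' :|: B')), A', B'; split; rewrite ?subsetDl //.
have [dA'B' UA'B' _ _ _] := sep'.
have sY : A' :|: B' \subset V by rewrite UA'B' subsetDl.
rewrite cardsD (setIidPr sY) cardsU (disjoint_setI0 dA'B') cards0 subn0 cardA' cardB'.
by rewrite /a /s; lia.
Qed.

Lemma vcut_card V E X : vcut V E X -> #|X|.+2 <= #|V|.
Proof.
case/andP=> XV disconn; rewrite leqNgt; apply: contra disconn => small.
apply/connectedbP/connected_card_le1.
by rewrite /hdel_V cardsD (setIidPr XV); lia.
Qed.

Lemma kappa_le_vcut V E X : vcut V E X -> kappa V E <= #|X|.
Proof.
move=> cutX; rewrite /kappa; case: ifP => [_ | /existsP[]]; last by exists X.
exact: bigmin_le.
Qed.

Lemma kappa_le_card V E : kappa V E <= #|V|.-1.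
Proof.
rewrite /kappa; case: ifP => // /existsP[X cutX].
apply: leq_trans (bigmin_le _ _ cutX) _.
by have := vcut_card cutX; lia.
Qed.

Lemma kappa_vcut V E k :
  kappa V E <= k -> k.+2 <= #|V| -> exists2 X, vcut V E X & #|X| <= k.
Proof.
rewrite /kappa; case: ifP => [_ | _]; last lia.
move=> kap kV; apply: NNPP => none; move: kap; apply/negP; rewrite -ltnNge.
elim/big_ind: _ => [| x y | X cutX]; first lia.
  by rewrite leq_min => -> ->.
by rewrite ltnNge; apply/negP => Xk; apply: none; exists X.
Qed.

Lemma kappa_le_kappabar V E V' E' : subhyp V' E' V E -> kappa V' E' <= kappabar V E.
Proof. exact: (leq_bigmax_cond (V', E')). Qed.

Lemma kappabar_witness V E : exists V' E', subhyp V' E' V E /\ kappabar V E = kappa V' E'.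
Proof.
have sub0 : subhyp set0 set0 V E.
  by rewrite /subhyp !sub0set; apply/forall_inP => e; rewrite inE.
rewrite /kappabar (bigmax_eq_arg (set0, set0) sub0).
by case: arg_maxnP => // -[V' E'] /= sub _; exists V', E'.
Qed.

Lemma kappabar_le_card V E : kappabar V E <= #|V|.-1.
Proof.
apply/bigmax_leqP => -[V' E'] /= /and3P[sV _ _].
by apply: leq_trans (kappa_le_card _ _) _; rewrite -!subn1 leq_sub2r // subset_leq_card.
Qed.

Lemma kappabar_mono V E V1 E1 :
  V1 \subset V -> E1 \subset E -> kappabar V1 E1 <= kappabar V E.
Proof.
move=> sV sE; apply/bigmax_leqP => -[V' E'] /= /and3P[sV' sE' E'V'].
by apply: kappa_le_kappabar; rewrite /subhyp E'V' (subset_trans sV') ?(subset_trans sE').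
Qed.

Definition induced E S := [set f in E | f \subset S].

Definition saturating V E (k r : nat) := [set e : {set T} |
  [&& e \subset V, #|e| == r, e \notin E & k < kappabar V (e |: E)]].

Definition crossing A B (r : nat) := draws (A :|: B) r :\: (draws A r :|: draws B r).

Lemma card_crossing A B r : [disjoint A & B] -> 0 < r ->
  'C(#|A|, r) + 'C(#|B|, r) + #|crossing A B r| = 'C(#|A| + #|B|, r).
Proof.
move=> dAB r0.
have dD : [disjoint draws A r & draws B r].
  rewrite -setI_eq0; apply/eqP/setP => e; rewrite !inE; apply/negbTE/negP.
  case/andP=> /andP[eA /eqP er] /andP[eB _]; have : e \subset A :&: B by rewrite subsetI eA eB.
  by rewrite (disjoint_setI0 dAB) subset0 => /eqP e0; rewrite e0 cards0 in er; lia.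
have sub : draws A r :|: draws B r \subset draws (A :|: B) r.
  apply/subsetP => e; rewrite !inE => /orP[] /andP[eC ->]; rewrite andbT.
    exact: subset_trans eC (subsetUl _ _).
  exact: subset_trans eC (subsetUr _ _).
have cardU : #|draws A r :|: draws B r| = 'C(#|A|, r) + 'C(#|B|, r).
  by rewrite cardsU (disjoint_setI0 dD) cards0 subn0 !cards_draws.
rewrite -cardU -{1}(setIidPr sub) cardsID cards_draws.
by rewrite cardsU (disjoint_setI0 dAB) cards0 subn0.
Qed.

Lemma saturating_small V E k r : #|V| <= k.+1 -> saturating V E k r = set0.
Proof.
move=> Vk; apply/setP => e; rewrite !inE; apply/negbTE.
by apply/negP => /and4P[_ _ _]; have := kappabar_le_card V (e |: E); lia.
Qed.

Lemma saturating_side V E X A B V' E' e k r :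
  separation V E X A B -> kappabar V E <= k ->
  subhyp V' E' V (e |: E) -> k < kappa V' E' -> V' :&: B = set0 ->
  e \in saturating V E k r -> e \in saturating (A :|: X) (induced E (A :|: X)) k r.
Proof.
move=> [_ UAB _ _ _] kbk /and3P[sV' sE' /forall_inP E'V'] kap V'B0.
rewrite !inE => /and4P[_ er eE _].
have V'AX : V' \subset A :|: X.
  apply/subsetP => w wV'; rewrite inE.
  case: (boolP (w \in X)) => [_ | wX]; rewrite ?orbT // orbF.
  have : w \in A :|: B by rewrite UAB inE wX (subsetP sV').
  case/setUP => [-> // | wB].
  have : w \in V' :&: B by rewrite inE wV' wB.
  by rewrite V'B0 inE.
have eE' : e \in E'.
  apply: contraTT kap => eE'; rewrite -leqNgt; apply: leq_trans kbk.
  apply: kappa_le_kappabar; apply/and3P; split=> //; last by apply/forall_inP => f /E'V'.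
  apply/subsetP => f fE'; case/setU1P: (subsetP sE' f fE') => [fe | //].
  by rewrite -fe fE' in eE'.
rewrite (subset_trans (E'V' e eE') V'AX) er (negbTE eE) /=.
apply: leq_trans kap (kappa_le_kappabar _).
apply/and3P; split=> //; last by apply/forall_inP => f /E'V'.
apply/subsetP => f fE'; case/setU1P: (subsetP sE' f fE') => [-> | fE]; first exact: setU11.
by rewrite !inE fE (subset_trans (E'V' f fE') V'AX) orbT.
Qed.

Lemma saturating_split V E X A B k r :
  separation V E X A B -> kappabar V E <= k -> #|X| <= k ->
  saturating V E k r \subset
    saturating (A :|: X) (induced E (A :|: X)) k r :|:
    saturating (B :|: X) (induced E (B :|: X)) k r :|: crossing A B r.
Proof.
move=> sep kbk Xk; apply/subsetP => e eS; rewrite !in_setU.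
have [_ | ncross] := boolP (e \in crossing A B r); first by rewrite orbT.
have [V' [E' [sub kap']]] := kappabar_witness V (e |: E).
have kap : k < kappa V' E' by rewrite -kap'; move: eS; rewrite inE => /and4P[].
have [V'B0 | V'B] := eqVneq (V' :&: B) set0.
  by rewrite (saturating_side sep kbk sub kap V'B0 eS).
have [V'A0 | V'A] := eqVneq (V' :&: A) set0.
  by rewrite (saturating_side (separation_sym sep) kbk sub kap V'A0 eS) orbT.
have [sV' sE' /forall_inP E'V'] := and3P sub.
have sepE' : {in E', forall f, f \subset A :|: B -> f \subset A \/ f \subset B}.
  move=> f fE' fAB; case/setU1P: (subsetP sE' f fE') => [fe | fE]; last first.
    by case: sep => _ _ _ _; apply.
  rewrite fe in fAB *; move: eS; rewrite inE => /and4P[_ er _ _].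
  have : e \in draws A r :|: draws B r.
    by apply: contraNT ncross => nAB; rewrite inE nAB inE fAB er.
  by rewrite !inE => /orP[] /andP[]; auto.
have sep' := separation_restrict sep sV' E'V' sepE' V'A V'B.
have := kappa_le_vcut (separation_vcut (subsetIl _ _) sep').
by have := subset_leq_card (subsetIr V' X); lia.
Qed.

Lemma card_saturating V E k r :
  0 < r -> kappabar V E <= k -> {in E, forall f, f \subset V} ->
  #|saturating V E k r| <= 'C(#|V| - k, r).
Proof.
move=> r0; move Vn : #|V| => n; elim/ltn_ind: n V E Vn => n IH V E Vn kbk EV.
have [Vk | kV] := leqP n k.+1; first by rewrite saturating_small ?cards0 ?Vn.
have kapk : kappa V E <= k.
  apply: leq_trans kbk; apply: kappa_le_kappabar.
  by rewrite /subhyp !subxx; apply/forall_inP.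
have kV' : k.+2 <= #|V| by rewrite Vn.
have [X0 cut0 X0k] := kappa_vcut kapk kV'.
have [A0 [B0 sep0]] := vcut_separation cut0.
have [X [A [B [sep XV Xk]]]] := separation_resize sep0 (proj1 (andP cut0)) X0k kV'.
have cardVX : #|V :\: X| = n - k by rewrite cardsD (setIidPr XV) Vn Xk.
have side C D : separation V E X C D ->
    #|saturating (C :|: X) (induced E (C :|: X)) k r| <= 'C(#|C|, r).
  move=> sepCD; have [_ UCD _ D0 _] := sepCD.
  have : C \subset V :\: X by rewrite -UCD subsetUl.
  rewrite subsetD => /andP[CV dCX].
  have cardCX : #|C :|: X| = #|C| + k by rewrite cardsU (disjoint_setI0 dCX) cards0 subn0 Xk.
  have := card_separation sepCD; rewrite cardVX -card_gt0 in D0 * => cardCD.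
  rewrite -(addnK k #|C|); apply: (IH (#|C| + k)) => //; first lia.
  - apply: leq_trans kbk; apply: kappabar_mono; first by rewrite subUset CV.
    by apply/subsetP => f; rewrite inE => /andP[].
  - by move=> f; rewrite inE => /andP[].
have [dAB _ _ _ _] := sep.
apply: leq_trans (subset_leq_card (saturating_split r sep kbk (eq_leq Xk))) _.
rewrite -cardVX -(card_separation sep) -card_crossing //.
apply: leq_trans (leq_card_setU _ _).1 _; rewrite leq_add2r.
apply: leq_trans (leq_card_setU _ _).1 _.
exact: leq_add (side _ _ sep) (side _ _ (separation_sym sep)).
Qed.

End Hypergraphs.

Theorem theorem3p2 (T : finType) (n k r : nat) (E : {set {set T}}) :
  2 <= k -> 2 <= r -> k.+1 <= n -> #|T| = n ->
  uniform r E ->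
  vertex_k_maximal r k [set: T] E ->
  'C(n, r) - 'C(n - k, r) <= #|E|.
Proof.
move=> _ r2 _ cardTn _ [kbk maxE].
have sat := card_saturating (ltnW r2) kbk (fun f _ => subsetT f).
rewrite cardsT cardTn in sat.
set D := draws [set: T] r.
have cardD : #|D| = 'C(n, r) by rewrite cards_draws cardsT cardTn.
have nonedges : D :\: E \subset saturating [set: T] E k r.
  apply/subsetP => e; rewrite !inE => /andP[eE /andP[_ /eqP er]].
  by rewrite subsetT er eqxx eE; apply: maxE; rewrite ?subsetT.
rewrite leq_subLR addnC -cardD -(cardsID E D) leq_add ?subset_leq_card ?subsetIr //.
exact: leq_trans (subset_leq_card nonedges) sat.
Qed.
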